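(* For every integer $k\ge 2$ and every positive integer $n$, \[ t_{2k+1}(n)\le 9(k-1)\,\mathrm{ex}\!\left(\left\lceil \tfrac{n}{3}\right\rceil,\left\lceil \tfrac{n}{3}\right\rceil, C_{2k}\right). \]
   Context: All graphs are simple. For a graph $G$, $t(G)$ denotes the number of triangles ($K_3$ subgraphs) of $G$. A graph is $F$-free if it contains no (not necessarily induced) subgraph isomorphic to $F$. For $\ell\ge 3$, $t_\ell(n)$ is the maximum of $t(G)$ over all $C_\ell$-free graphs $G$ on $n$ vertices, where $C_\ell$ is the cycle of length $\ell$. $\mathrm{ex}(m,n,F)$ denotes the maximum number of edges in a bipartite graph with parts of sizes $m$ and $n$ that contains no subgraph isomorphic to $F$. *)

From mathcomp Require Import all_boot.
Set Implicit Arguments. Unset Strict Implicit. Unset Printing Implicit Defensive.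

Definition adj (T : finType) (E : {set T * T}) (x y : T) : bool := (x, y) \in E.

Definition simple_graph (T : finType) (E : {set T * T}) : bool :=
  [forall x, forall y, (adj E x y == adj E y x)] && [forall x, ~~ adj E x x].

(* G contains C_l (not necessarily induced): an injective map of the cycle
   vertices 0..l-1 into T, consecutive vertices (mod l) adjacent. *)
Definition has_cycle (T : finType) (l : nat) (E : {set T * T}) : bool :=
  [exists f : {ffun 'I_l -> T},
     injectiveb f &&
     [forall i : 'I_l, forall j : 'I_l,
        (val j == (val i).+1 %% l) ==> adj E (f i) (f j)]].

Definition cycle_free (T : finType) (l : nat) (E : {set T * T}) : bool :=
  ~~ has_cycle l E.

Definition triangles (T : finType) (E : {set T * T}) : nat :=
  #|[set S : {set T} | (#|S| == 3) &&
       [forall x in S, forall y in S, (x != y) ==> adj E x y]]|.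

Definition t_max (l n : nat) : nat :=
  \max_(E : {set 'I_n * 'I_n} | simple_graph E && cycle_free l E) triangles E.

Definition bip_graph (m n : nat) (B : {set 'I_m * 'I_n}) : {set ('I_m + 'I_n) * ('I_m + 'I_n)} :=
  [set p : ('I_m + 'I_n) * ('I_m + 'I_n) |
     match p with
     | (inl a, inr b) => (a, b) \in B
     | (inr b, inl a) => (a, b) \in B
     | _ => false
     end].

Definition ex_bip_cycle (m n l : nat) : nat :=
  \max_(B : {set 'I_m * 'I_n} | cycle_free l (bip_graph B)) #|B|.

From mathcomp Require Import all_boot all_fingroup zify ring.
Set Implicit Arguments. Unset Strict Implicit. Unset Printing Implicit Defensive.

(* A random balanced 3-colouring makes a given triangle rainbow with probability at least
   2/9, so some colouring c whose classes have at most ceil(n/3) vertices keeps 2/9 of the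
   triangles rainbow.  Count a rainbow triangle xyz (colours 0, 1, 2) at z: the 0-1 edges
   inside the neighbourhood of z form a bipartite graph without a path on 2k vertices (it
   would close through z into a C_{2k+1}), hence they number at most (k-1)|S_z|, where S_z
   is the set of their endpoints.  A pair (v, z) with v in S_z is an edge of colours {0,2}
   or {1,2} lying in a triangle whose third vertex has the remaining colour.  For a fixed
   pair of colours these edges form a bipartite graph on two colour classes without C_{2k}:
   detouring a C_{2k} through the third vertex of a triangle on one of its edges yields a
   C_{2k+1}.  Altogether 2/9 t(G) <= 2(k-1) ex(ceil(n/3), ceil(n/3), C_{2k}). *)

(* [cycle] alone is the cyclic subgroup of fingroup, hence [path.cycle]. *)
Lemma cycle_nthP (T : Type) (e : rel T) x0 (s : seq T) :
  reflect (forall i, i < size s -> e (nth x0 s i) (nth x0 s (i.+1 %% size s)))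
          (path.cycle e s).
Proof.
case: s => [|x p] /=; first by left.
have nthE i : i < (size p).+1 ->
    nth x0 (x :: rcons p x) i = nth x0 (x :: p) i /\
    nth x0 (rcons p x) i = nth x0 (x :: p) (i.+1 %% (size p).+1).
  rewrite ltnS leq_eqVlt => hi; rewrite -rcons_cons !nth_rcons /= ltnS.
  case/orP: hi => [/eqP -> | hlt]; first by rewrite leqnn ltnn eqxx modnn.
  by rewrite ltnW // hlt modn_small.
apply: (iffP (pathP x0)) => h i; rewrite ?size_rcons => hi; have [E1 E2] := nthE i hi.
  by rewrite -E1 -E2; apply: h; rewrite size_rcons.
by rewrite E1 E2; apply: h.
Qed.

Lemma has_cycleP (T : finType) (l : nat) (E : {set T * T}) : 0 < l ->
  reflect (exists s : seq T, [/\ size s = l, uniq s & path.cycle (adj E) s])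
          (has_cycle l E).
Proof.
case: l => // l _; apply: (iffP existsP).
- move=> [f /andP [/injectiveP f_inj /forallP f_adj]].
  exists (mkseq (fun i => f (inord i)) l.+1); split; first by rewrite size_mkseq.
    rewrite map_inj_in_uniq ?iota_uniq // => i j; rewrite !mem_iota /=.
    by move=> hi hj /f_inj /(congr1 val) /=; rewrite !inordK.
  apply/(cycle_nthP _ (f ord0)) => i; rewrite size_mkseq => hi.
  rewrite !nth_mkseq ?ltn_pmod //.
  move/forallP: (f_adj (inord i)) => /(_ (inord (i.+1 %% l.+1))) /implyP; apply.
  by rewrite /= !inordK ?ltn_pmod.
- move=> [s [size_s uniq_s cyc_s]]; have [x0 _] : {x0 | x0 \in s}.
    by case: s size_s {uniq_s cyc_s} => // x0 s' _; exists x0; rewrite mem_head.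
  exists [ffun i : 'I_l.+1 => nth x0 s i]; apply/andP; split.
    apply/injectiveP => i j; rewrite !ffunE => /eqP.
    by rewrite nth_uniq ?size_s // => /eqP /val_inj.
  apply/forallP => i; apply/forallP => j; apply/implyP => /eqP hj.
  rewrite !ffunE hj; move/(cycle_nthP _ x0): cyc_s; rewrite size_s; exact.
Qed.

Lemma cycle_splice (T : Type) (e : rel T) x y z s :
  path.cycle e (x :: y :: s) -> e x z -> e z y -> path.cycle e (z :: rcons (y :: s) x).
Proof. by rewrite /= !rcons_path last_rcons => /and3P [_ -> ->] -> ->. Qed.

Lemma adj_sym (T : finType) (E : {set T * T}) : simple_graph E -> symmetric (adj E).
Proof. by move=> /andP [/forallP hsym _] x y; apply/eqP/(forallP (hsym x)). Qed.

Lemma adj_irr (T : finType) (E : {set T * T}) x : simple_graph E -> adj E x x = false.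
Proof. by move=> /andP [_ /forallP /(_ x) /negPf]. Qed.

Lemma has_cycle_cone (T : finType) (E : {set T * T}) (z x : T) s l :
  simple_graph E -> 0 < l -> l <= size (x :: s) -> uniq (x :: s) ->
  path (adj E) x s -> all (adj E ^~ z) (x :: s) -> has_cycle l.+1 E.
Proof.
move=> simpleE l_gt0 long uniq_xs path_xs cone.
pose q := x :: take l.-1 s.
have q_cone : all (adj E ^~ z) q.
  by move: cone => /= /andP [-> /allP cone]; apply/allP => v /mem_take /cone.
apply/(has_cycleP E (ltn0Sn _)); exists (z :: q); split.
- by rewrite /= size_takel; [lia | move: long => /=; lia].
- rewrite cons_uniq; apply/andP; split.
    by apply/negP => /(allP q_cone); rewrite adj_irr.
  move: uniq_xs => /= /andP [xs us]; rewrite take_uniq // andbT.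
  by apply: contra xs; apply: mem_take.
- rewrite /= rcons_path -/q adj_sym // (allP q_cone) ?mem_head //=.
  by rewrite (allP q_cone _ (mem_last _ _)) andbT take_path.
Qed.

Section BipartitePaths.

Variables (T : finType) (e : rel T) (side : pred T).
Hypothesis e_sym : symmetric e.
Hypothesis e_bip : forall x y, e x y -> side x != side y.

Definition upath_in (S : {set T}) x s :=
  [&& x \in S, all [in S] s, uniq (x :: s) & path e x s].

Lemma side_nth_path x s i :
  path e x s -> i <= size s -> side (nth x (x :: s) i) = side x (+) odd i.
Proof.
elim: s x i => [|y s IH] x [|i] //=; rewrite ?addbF // => /andP [hxy hp] hi.
rewrite (set_nth_default y) // IH //.
by have := e_bip hxy; case: (side x); case: (side y) => //= _; case: (odd i).
Qed.

Lemma exists_path_saturated_head (S : {set T}) x s : upath_in S x s ->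
  exists x' s', upath_in S x' s' /\ {in S, forall u, e x' u -> u \in x' :: s'}.
Proof.
have [N] := ubnP (#|S| - size s); elim: N x s => // N IH x s hN hxs.
have /and4P [hx hs hu hp] := hxs.
case: (pickP [pred u | [&& u \in S, e x u & u \notin x :: s]]) => [u | none].
  move=> /and3P [huS hxu hun].
  have hus : upath_in S u (x :: s).
    by rewrite /upath_in /= huS hx hs hun -cons_uniq hu e_sym hxu hp.
  apply: (IH u (x :: s)) => //.
  have: size (u :: x :: s) <= #|S|.
    have /card_uniqP <- : uniq (u :: x :: s) by rewrite cons_uniq hun.
    apply/subset_leq_card/subsetP.
    by move=> v; rewrite !inE => /orP [/eqP -> | /orP [/eqP -> | /(allP hs)]].
  by move: hN => /=; lia.
exists x, s; split => // u huS hxu; apply: contraFT (none u) => hun.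
by rewrite /= huS hxu hun.
Qed.

(* Take a path whose head has all its [S]-neighbours on it: they sit at odd positions, and
   there are at least [k] of them. *)
Lemma long_path_of_min_degree (S : {set T}) k x0 : x0 \in S ->
  {in S, forall v, k <= \sum_(u in S) e v u} ->
  exists x s, upath_in S x s /\ 2 * k <= size (x :: s).
Proof.
move=> hx0 hdeg.
have [|x [s [hxs hsat]]] := @exists_path_saturated_head S x0 [::].
  by rewrite /upath_in /= hx0.
have /and4P [hx _ _ hp] := hxs.
exists x, s; split => //.
pose Nx := [set u in S | e x u].
have hk : k <= #|Nx|.
  apply: leq_trans (hdeg x hx) _; rewrite -sum1_card big_mkcond /= [X in _ <= X]big_mkcond.
  by apply: leq_sum => u _; rewrite inE; case: (u \in S); case: (e x u).
have hodd u : u \in Nx -> odd (index u (x :: s)) /\ index u (x :: s) <= size s.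
  rewrite inE => /andP [huS hxu]; have hin := hsat u huS hxu.
  have hi : index u (x :: s) <= size s by rewrite -ltnS index_mem.
  split => //; have := side_nth_path hp hi; rewrite nth_index //.
  by have := e_bip hxu; case: (side x); case: (side u) => //= _; case: odd.
pose half_index u := (index u (x :: s))./2.
have half_inj : {in Nx &, injective half_index}.
  move=> u v hu hv huv; have [ou _] := hodd u hu; have [ov _] := hodd v hv.
  have := odd_double_half (index u (x :: s)); have := odd_double_half (index v (x :: s)).
  rewrite ou ov -/(half_index u) -/(half_index v) huv => -> /(congr1 (nth x (x :: s))).
  move: hu hv; rewrite !inE => /andP [hu1 hu2] /andP [hv1 hv2].
  by rewrite !nth_index ?hsat.
have hsub : {subset map half_index (enum Nx) <= iota 0 (size (x :: s))./2}.
  move=> j /mapP [u]; rewrite mem_enum => hu ->; rewrite mem_iota add0n.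
  have [] := hodd u hu; rewrite /half_index; move: (index u _) => i oi hi.
  have := odd_double_half i; have := odd_double_half (size s).+1.
  by rewrite oi; case: odd => /=; lia.
have half_uniq : uniq (map half_index (enum Nx)).
  by rewrite map_inj_in_uniq ?enum_uniq // => u v; rewrite !mem_enum; apply: half_inj.
have := uniq_leq_size half_uniq hsub; rewrite size_map size_iota -cardE /= => hNx.
by have := odd_double_half (size s).+1; case: odd => /=; lia.
Qed.

Lemma upath_in_subset (S S' : {set T}) x s :
  S' \subset S -> upath_in S' x s -> upath_in S x s.
Proof.
move=> /subsetP sub /and4P [hx hs hu hp].
by rewrite /upath_in sub // (sub_all sub hs) hu hp.
Qed.

(* Each edge is counted once, from its endpoint on the [side].  Induct on [#|S|] by deleting a
   vertex of degree less than [k]; if there is none, [long_path_of_min_degree] applies. *)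
Lemma short_paths_edge_count_le (S : {set T}) k :
  (forall x s, upath_in S x s -> size (x :: s) < 2 * k) ->
  \sum_(x in S) \sum_(y in S) (e x y && side x) <= k.-1 * #|S|.
Proof.
have [N] := ubnP #|S|; elim: N S => // N IH S hN hshort.
case: (pickP [pred v in S | \sum_(u in S) e v u < k]) => [v /andP [hv hdeg] | hmin].
  set S' := S :\ v.
  have hv_edges : \sum_(y in S) (e v y && side v) + \sum_(x in S') (e x v && side x) <= k.-1.
    apply: (@leq_trans (\sum_(y in S) ((e v y && side v) + (e y v && side y)))).
      by rewrite big_split leq_add2l (big_setD1 v hv) leq_addl.
    apply: leq_trans (_ : \sum_(y in S) e v y <= k.-1).
      by apply: leq_sum => y _; rewrite (e_sym y v); case: (boolP (e v y)) => //= hvy;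
        have := e_bip hvy; case: (side v); case: (side y).
    by rewrite -ltnS prednK // (leq_trans _ hdeg).
  rewrite (big_setD1 v hv) /= (cardsD1 v S) hv mulnS.
  under [\sum_(x in S') _]eq_bigr => x _ do rewrite (big_setD1 v hv).
  rewrite big_split /= addnA; apply: leq_add hv_edges (IH S' _ _).
    by move: hN; rewrite (cardsD1 v S) hv.
  by move=> x s /(upath_in_subset (subsetDl S [set v])); apply: hshort.
have [-> | [x0 hx0]] := set_0Vmem S; first by rewrite big_set0.
have [|x [s [hxs hlong]]] := @long_path_of_min_degree S k x0 hx0.
  by move=> v hv; have := hmin v; rewrite /= hv /= ltnNge => /negbFE.
by have := hshort x s hxs; rewrite ltnNge hlong.
Qed.

End BipartitePaths.

Definition c0 : 'I_3 := @Ordinal 3 0 isT.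
Definition c1 : 'I_3 := @Ordinal 3 1 isT.
Definition c2 : 'I_3 := @Ordinal 3 2 isT.

Lemma card_fibers (U V : finType) (A : {set U * V}) :
  #|A| = \sum_z #|[set u | (u, z) \in A]|.
Proof.
rewrite -sum1_card big_mkcond (eq_bigr (fun p => ((p.1, p.2) \in A) : nat)) => [|[]//].
rewrite -(pair_bigA _ (fun u z => ((u, z) \in A) : nat)) exchange_big /=.
apply: eq_bigr => z _.
by rewrite -sum1dep_card [RHS]big_mkcond; apply: eq_bigr => u _; case: (_ \in A).
Qed.

Definition triangle_sets (T : finType) (E : {set T * T}) : {set {set T}} :=
  [set S : {set T} | (#|S| == 3) &&
     [forall x in S, forall y in S, (x != y) ==> adj E x y]].

Definition rainbow (T : finType) (c : T -> 'I_3) (S : {set T}) : bool :=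
  c @: S == [set: 'I_3].

Lemma rainbow3P (T : finType) (c : T -> 'I_3) (S : {set T}) :
  reflect (exists x y z, [/\ c x = c0, c y = c1, c z = c2 & S = [set x; y; z]])
          ((#|S| == 3) && rainbow c S).
Proof.
have setT3 : [set: 'I_3] = [set c0; c1; c2].
  by apply/setP => -[[|[|[|//]]] ?]; rewrite !inE.
have card3 x y z : c x = c0 -> c y = c1 -> c z = c2 -> #|[set x; y; z]| = 3.
  have ne u v : c u != c v -> (u == v) = false by apply: contraNF => /eqP ->.
  move=> cx cy cz; have -> : [set x; y; z] = x |: (y |: [set z]).
    by apply/setP => v; rewrite !inE orbA.
  by rewrite !cardsU1 cards1 !inE !ne ?cx ?cy ?cz.
apply: (iffP andP) => [[/eqP S3 /eqP cS] | [x [y [z [cx cy cz ->]]]]].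
  have col r : exists2 x, x \in S & c x = r.
    have /imsetP [x xS ->] : r \in c @: S by rewrite cS inE.
    by exists x.
  have [x xS cx] := col c0; have [y yS cy] := col c1; have [z zS cz] := col c2.
  exists x, y, z; split => //; apply/esym/eqP; rewrite eqEcard S3 card3 // andbT.
  by apply/subsetP => v; rewrite !inE => /orP [/orP [] | ] /eqP ->.
rewrite card3 //; split => //.
by rewrite /rainbow !imsetU !imset_set1 cx cy cz setT3.
Qed.

Section TriangleEdges.

Variables (T : finType) (E : {set T * T}) (c : T -> 'I_3).
Hypothesis simpleE : simple_graph E.

Definition triangle_edges (a b w : 'I_3) : {set T * T} :=
  [set p | [&& c p.1 == a, c p.2 == b, adj E p.1 p.2 &
             [exists z, [&& c z == w, adj E p.1 z & adj E z p.2]]]].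

Definition colored_triangles : {set (T * T) * T} :=
  [set t | [&& c t.1.1 == c0, c t.1.2 == c1, c t.2 == c2,
              adj E t.1.1 t.1.2, adj E t.1.1 t.2 & adj E t.1.2 t.2]].

Lemma rainbow_triangles_le_colored :
  #|[set S in triangle_sets E | rainbow c S]| <= #|colored_triangles|.
Proof.
pose vertices (t : (T * T) * T) := [set t.1.1; t.1.2; t.2].
apply: leq_trans (leq_imset_card vertices _); apply/subset_leq_card/subsetP => S.
rewrite !inE -andbA => /and3P [S3 adjS rcS].
have /rainbow3P [x [y [z [cx cy cz defS]]]] : (#|S| == 3) && rainbow c S by rewrite S3.
have adjxyz u v : u \in S -> v \in S -> c u != c v -> adj E u v.
  move=> uS vS cuv; move/forallP: adjS => /(_ u) /implyP /(_ uS) /forallP /(_ v).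
  by rewrite vS /= => /implyP; apply; apply: contraNneq cuv => ->.
have [xS yS zS] : [/\ x \in S, y \in S & z \in S] by rewrite defS !inE !eqxx ?orbT.
apply/imsetP; exists ((x, y), z); last by [].
by rewrite inE /= cx cy cz !eqxx !adjxyz ?cx ?cy ?cz.
Qed.

(* The 0-1 edges of the neighbourhood of [z] form a bipartite graph, and a path on [2k]
   vertices there closes through [z] into a [C_(2k+1)]. *)
Lemma colored_triangles_at_le k z : 0 < k -> cycle_free (2 * k + 1) E ->
  #|[set p | (p, z) \in colored_triangles]|
    <= k.-1 * #|[set v | (v, z) \in triangle_edges c0 c2 c1 :|: triangle_edges c1 c2 c0]|.
Proof.
move=> hk; rewrite addn1 => hfree; set S := [set v | (v, z) \in _ :|: _].
pose side v := c v == c0.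
pose e := [rel u v | adj E u v && (side u != side v)].
have e_sym : symmetric e by move=> u v; rewrite /= adj_sym // eq_sym.
have e_bip u v : e u v -> side u != side v by case/andP.
have S_adj : {in S, forall v, adj E v z}.
  by move=> v; rewrite !inE => /orP [] /and4P [].
have short x s : upath_in e S x s -> size (x :: s) < 2 * k.
  move=> /and4P [xS sS uniq_xs path_xs]; rewrite ltnNge; apply: contra hfree => long.
  apply: (has_cycle_cone (z := z) simpleE _ long uniq_xs); first by rewrite muln_gt0.
    by apply: sub_path path_xs => u v /andP [].
  by rewrite /= S_adj //; apply/allP => v /(allP sS) /S_adj.
apply: leq_trans (short_paths_edge_count_le e_sym e_bip short).
rewrite pair_big /= -sum1dep_card big_mkcond [X in _ <= X]big_mkcond /=.
apply: leq_sum => -[x y] _ /=; rewrite inE; case: ifP => // /and5P [cx cy cz xy /andP [xz yz]].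
have [xS yS] : x \in S /\ y \in S.
  split; rewrite !inE /= ?cx ?cy ?cz ?xz ?yz /=; apply/orP; [left | right].
    by apply/existsP; exists y; rewrite cy xy yz.
  by apply/existsP; exists x; rewrite cx adj_sym // xy xz.
by rewrite xS yS /= xy /side (eqP cx) (eqP cy).
Qed.

Variables (M : nat) (idx : T -> 'I_M).
Hypothesis idx_inj : forall x y, c x = c y -> idx x = idx y -> x = y.

Definition triangle_bigraph a b w : {set 'I_M * 'I_M} :=
  [set (idx p.1, idx p.2) | p in triangle_edges a b w].

Lemma card_triangle_bigraph a b w :
  #|triangle_bigraph a b w| = #|triangle_edges a b w|.
Proof.
apply: card_in_imset => -[x y] [x' y']; rewrite !inE /=.
move=> /and4P [/eqP cx /eqP cy _ _] /and4P [/eqP cx' /eqP cy' _ _] [ix iy].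
have -> : x = x' by apply: idx_inj ix; rewrite cx cx'.
by have -> : y = y' by apply: idx_inj iy; rewrite cy cy'.
Qed.

(* A vertex of the bipartite graph stands for the vertex of [E] with this colour and index. *)
Definition bigraph_key (a b : 'I_3) (u : 'I_M + 'I_M) : 'I_3 * 'I_M :=
  match u with inl i => (a, i) | inr j => (b, j) end.

Lemma bigraph_key_inj a b : a != b -> injective (bigraph_key a b).
Proof.
move=> hab [i|i] [j|j] /= [] => [-> | eq_ab _ | eq_ba _ | ->] //.
  by rewrite eq_ab eqxx in hab.
by rewrite eq_ba eqxx in hab.
Qed.

Lemma triangle_bigraph_adj a b w u v :
  adj (bip_graph (triangle_bigraph a b w)) u v ->
  exists x y, [/\ (c x, idx x) = bigraph_key a b u, (c y, idx y) = bigraph_key a b v,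
    adj E x y & exists2 z, c z = w & adj E x z && adj E z y].
Proof.
rewrite {1}/adj /bip_graph inE; case: u => [i|i]; case: v => [j|j] //;
  move=> /imsetP [[x y] + [-> ->]]; rewrite inE /=;
  move=> /and4P [/eqP cx /eqP cy hxy /existsP [z /and3P [/eqP cz hxz hzy]]].
  by exists x, y; rewrite cx cy; split => //; exists z; rewrite ?hxz.
exists y, x; rewrite cx cy adj_sym //; split => //.
by exists z; rewrite // adj_sym // hzy adj_sym.
Qed.

(* Lift a cycle of the bipartite graph to [E]; its first edge lies in a triangle whose third
   vertex has colour [w], hence is off the lifted cycle, and the detour through it is one
   edge longer. *)
Lemma triangle_bigraph_cycle_free a b w l :
  a != b -> a != w -> b != w -> 1 < l ->
  cycle_free l.+1 E -> cycle_free l (bip_graph (triangle_bigraph a b w)).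
Proof.
move=> hab haw hbw hl; apply: contra => /(has_cycleP _ (ltnW hl)) [s [size_s uniq_s cyc_s]].
pose key := bigraph_key a b.
have [u0 [u1 [rest def_s]]] : exists u0 u1 rest, s = u0 :: u1 :: rest.
  by case: s size_s {uniq_s cyc_s} hl => [|u0 [|u1 rest]] /= <- //; exists u0, u1, rest.
have first_edge : adj (bip_graph (triangle_bigraph a b w)) u0 u1.
  by move: cyc_s; rewrite def_s /= => /andP [].
have [x0 [y0 [hx0 hy0 _ [z cz /andP [hx0z hzy0]]]]] := triangle_bigraph_adj first_edge.
pose phi u := odflt x0 [pick x | (c x, idx x) == key u].
have phi_key u x : (c x, idx x) = key u -> phi u = x.
  move=> hx; rewrite /phi; case: pickP => [y /eqP | /(_ x)]; last by rewrite hx eqxx.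
  by rewrite -hx => -[cy iy]; rewrite /= (idx_inj cy iy).
have phi_edge u v : adj (bip_graph (triangle_bigraph a b w)) u v ->
    adj E (phi u) (phi v) /\ (c (phi u), idx (phi u)) = key u.
  by move=> /triangle_bigraph_adj [x [y [hx hy hxy _]]]; rewrite (phi_key _ _ hx) (phi_key _ _ hy).
have phi_s : {in s, forall u, (c (phi u), idx (phi u)) = key u}.
  by move=> u hu; have [] := phi_edge _ _ (next_cycle cyc_s hu).
set t := map phi s.
have uniq_t : uniq t.
  rewrite map_inj_in_uniq // => u v hu hv huv; apply: (bigraph_key_inj hab); rewrite -/key.
  by rewrite -(phi_s u hu) -(phi_s v hv) huv.
have cyc_t : path.cycle (adj E) t.
  apply: (homo_cycle_in (P := [in s])) cyc_s; last exact/allP.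
  by move=> u v _ _ /phi_edge [].
have z_t : z \notin t.
  apply/mapP => -[u hu hzu]; have := phi_s u hu; rewrite -hzu cz.
  by case: (u) => i [] /eqP; rewrite eq_sym ?(negbTE haw) ?(negbTE hbw).
have t_eq : t = x0 :: y0 :: map phi rest.
  by rewrite /t def_s /= (phi_key _ _ hx0) (phi_key _ _ hy0).
apply/(has_cycleP _ (ltn0Sn l)); exists (z :: rcons (y0 :: map phi rest) x0); split.
- by rewrite /= size_rcons -size_s def_s /= size_map.
- by rewrite -rot1_cons -t_eq /= mem_rot rot_uniq z_t uniq_t.
- by apply: cycle_splice; rewrite -?t_eq.
Qed.

Lemma card_triangle_edges_le a b w l :
  a != b -> a != w -> b != w -> 1 < l -> cycle_free l.+1 E ->
  #|triangle_edges a b w| <= ex_bip_cycle M M l.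
Proof.
move=> hab haw hbw hl hfree; rewrite -card_triangle_bigraph.
by rewrite /ex_bip_cycle; apply: leq_bigmax_cond; apply: triangle_bigraph_cycle_free.
Qed.

Lemma rainbow_triangles_le k : 0 < k -> cycle_free (2 * k + 1) E ->
  #|[set S in triangle_sets E | rainbow c S]| <= 2 * k.-1 * ex_bip_cycle M M (2 * k).
Proof.
move=> hk hfree; apply: leq_trans rainbow_triangles_le_colored _.
rewrite card_fibers.
apply: leq_trans; first by apply: leq_sum => z _; exact: (colored_triangles_at_le z hk hfree).
rewrite -big_distrr /= -card_fibers -mulnA mulnCA leq_mul2l mul2n -addnn.
rewrite addn1 in hfree; have hl : 1 < 2 * k by lia.
apply/orP; right; apply: leq_trans (leq_card_setU _ _) _.
by rewrite leq_add // card_triangle_edges_le.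
Qed.

End TriangleEdges.

Lemma exists_perm_imset (T : finType) (A B : {set T}) :
  #|A| = #|B| -> exists r : {perm T}, r @: A = B.
Proof.
move=> AB; pose enumC (C : {set T}) := enum C ++ enum (~: C).
have uniq_enumC C : uniq (enumC C).
  rewrite cat_uniq !enum_uniq andbT /=; apply/hasPn => x.
  by rewrite !mem_enum inE => /negbTE ->.
have mem_enumC C x : x \in enumC C by rewrite mem_cat !mem_enum inE orbN.
have size_enumC C : size (enumC C) = #|T| by rewrite size_cat -!cardE cardsC.
pose f x := nth x (enumC B) (index x (enumC A)).
have index_lt x : index x (enumC A) < size (enumC B).
  by rewrite size_enumC -(size_enumC A) index_mem.
have f_inj : injective f.
  move=> x y; rewrite /f (set_nth_default x y (index_lt y)) => /eqP.
  by rewrite nth_uniq // => /eqP; apply: (index_inj x); apply: mem_enumC.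
exists (perm f_inj); apply/eqP.
rewrite eqEcard card_imset ?AB ?leqnn ?andbT //; last exact: perm_inj.
apply/subsetP => _ /imsetP [x xA ->]; rewrite permE /f.
have xA' : x \in enum A by rewrite mem_enum.
have ix : index x (enum A) < size (enum B) by rewrite -cardE -AB cardE index_mem.
by rewrite index_cat xA' nth_cat ix -mem_enum mem_nth.
Qed.

Lemma rainbow_comp (T U : finType) (c : U -> 'I_3) (f : T -> U) (S : {set T}) :
  rainbow (c \o f) S = rainbow c (f @: S).
Proof. by rewrite /rainbow imset_comp. Qed.

Lemma exists_ge_average (I : finType) (f : I -> nat) :
  0 < #|I| -> exists i, \sum_j f j <= #|I| * f i.
Proof.
move=> I_gt0; have [i max_i] := eq_bigmax f I_gt0; exists i.
rewrite -max_i -sum1_card big_distrl /= mul1n; apply: leq_sum => j _.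
exact: leq_bigmax.
Qed.

Definition mod3 (N : nat) (x : 'I_N) : 'I_3 := Ordinal (ltn_pmod x (isT : 0 < 3)).

Lemma card_mod3_class N (r : 'I_3) :
  (N + 2 - r) %/ 3 <= #|[set x : 'I_N | mod3 x == r]|.
Proof.
pose q := (N + 2 - r) %/ 3.
have lt_N (i : 'I_q) : 3 * i + r < N by have := ltn_ord i; have := ltn_ord r; rewrite /q; lia.
pose g i := Ordinal (lt_N i).
rewrite -[X in X <= _]card_ord -(card_imset _ (_ : injective g)); last first.
  by move=> i j [] /eqP; rewrite eqn_add2r eqn_pmul2l // => /eqP /val_inj.
apply/subset_leq_card/subsetP => _ /imsetP [i _ ->]; rewrite inE; apply/eqP/val_inj => /=.
by rewrite mulnC modnMDl modn_small.
Qed.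

Lemma card_rainbow_sets_ge (T : finType) (c : T -> 'I_3) :
  #|[set x | c x == c0]| * #|[set x | c x == c1]| * #|[set x | c x == c2]|
    <= #|[set S : {set T} | (#|S| == 3) && rainbow c S]|.
Proof.
rewrite -!cardsX; pose vertices (t : (T * T) * T) := [set t.1.1; t.1.2; t.2].
pose classes := setX (setX [set x | c x == c0] [set x | c x == c1]) [set x | c x == c2].
have vertices_rainbow t : t \in classes ->
    (#|vertices t| == 3) && rainbow c (vertices t).
  by case: t => -[x y] z; rewrite !inE /= => /andP [/andP [/eqP ? /eqP ?] /eqP ?];
    apply/rainbow3P; exists x, y, z.
have color_inj (S : {set T}) : (#|S| == 3) && rainbow c S -> {in S &, injective c}.
  by move=> /andP [/eqP S3 /eqP cS]; apply/imset_injP; rewrite cS cardsT card_ord S3.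
rewrite -(card_in_imset (f := vertices)).
  apply/subset_leq_card/subsetP => _ /imsetP [t ht ->]; rewrite inE; exact: vertices_rainbow.
move=> [[x y] z] [[x' y'] z'] ht ht' eqV.
have := vertices_rainbow _ ht'; rewrite -eqV => /color_inj inj.
move: ht ht'; rewrite !inE /= => /andP [/andP [/eqP cx /eqP cy] /eqP cz].
move=> /andP [/andP [/eqP cx' /eqP cy'] /eqP cz'].
move: eqV; rewrite /vertices /= => eqV.
have [xS yS zS] : [/\ x \in [set x; y; z], y \in [set x; y; z] & z \in [set x; y; z]].
  by rewrite !inE !eqxx ?orbT.
have [x'S y'S z'S] : [/\ x' \in [set x; y; z], y' \in [set x; y; z] & z' \in [set x; y; z]].
  by rewrite eqV !inE !eqxx ?orbT.
have -> : x' = x by apply: inj; rewrite // cx cx'.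
have -> : y' = y by apply: inj; rewrite // cy cy'.
by have -> : z' = z by apply: inj; rewrite // cz cz'.
Qed.

Lemma bin3_le_thirds N : 2 * 'C(N, 3) <= 9 * ((N + 2) %/ 3 * ((N + 1) %/ 3) * (N %/ 3)).
Proof.
have h6 : 'C(N, 3) * 6 = N * N.-1 * N.-2.
  by rewrite -[6]/(3`!) bin_ffact !ffactnS ffactn0 muln1 mulnA.
have ha : N <= 3 * ((N + 2) %/ 3) by lia.
have hb : N.-1 <= 3 * ((N + 1) %/ 3) by lia.
have hd : N.-2 <= 3 * (N %/ 3) by lia.
have := leq_mul (leq_mul ha hb) hd; rewrite -h6.
have -> : 3 * ((N + 2) %/ 3) * (3 * ((N + 1) %/ 3)) * (3 * (N %/ 3))
  = 27 * ((N + 2) %/ 3 * ((N + 1) %/ 3) * (N %/ 3)) by ring.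
move: ((N + 2) %/ 3 * _ * _) => X; lia.
Qed.

Lemma card_rainbow_mod3_sets_ge N :
  2 * 'C(N, 3) <= 9 * #|[set S : {set 'I_N} | (#|S| == 3) && rainbow (@mod3 N) S]|.
Proof.
apply: leq_trans (bin3_le_thirds N) _; rewrite leq_mul2l /=.
apply: leq_trans (card_rainbow_sets_ge (@mod3 N)).
have h0 := card_mod3_class N c0; have h1 := card_mod3_class N c1.
have h2 := card_mod3_class N c2.
rewrite -[nat_of_ord c0]/0 subn0 in h0; rewrite -[nat_of_ord c1]/1 in h1.
rewrite -[nat_of_ord c2]/2 in h2.
rewrite (_ : N + 2 - 1 = N + 1) in h1; last by lia.
rewrite (_ : N + 2 - 2 = N) in h2; last by lia.
by apply: leq_mul; first apply: leq_mul.
Qed.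

Lemma card_set_sum (T : finType) (P b : pred T) :
  #|[set x | P x && b x]| = \sum_(x | P x) b x.
Proof. by rewrite -sum1dep_card big_mkcondr; apply: eq_bigr => x _; case: (b x). Qed.

Definition rainbow_perms N (S : {set 'I_N}) : nat :=
  \sum_(s : {perm 'I_N}) rainbow (@mod3 N \o s) S.

Lemma rainbow_perms_eq N (S S' : {set 'I_N}) :
  #|S| = #|S'| -> rainbow_perms S = rainbow_perms S'.
Proof.
move=> SS'; have [r rS] := exists_perm_imset SS'.
rewrite /rainbow_perms -rS [LHS](reindex_inj (mulgI r)); apply: eq_bigr => s _.
by rewrite /rainbow -imset_comp; congr (_ == _ : bool); apply: eq_imset => x; rewrite /= permM.
Qed.

Lemma sum_rainbow_perms N :
  \sum_(S : {set 'I_N} | #|S| == 3) rainbow_perms S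
    = #|{perm 'I_N}| * #|[set S : {set 'I_N} | (#|S| == 3) && rainbow (@mod3 N) S]|.
Proof.
rewrite exchange_big -sum_nat_const /=; apply: eq_big => [//|s _].
rewrite card_set_sum [RHS](reindex_inj (imset_inj (@perm_inj _ s))).
apply: eq_big => S; first by rewrite card_imset //; apply: perm_inj.
by rewrite rainbow_comp.
Qed.

(* Averaging over the balanced colourings [mod3 \o s]: every 3-set is rainbow for the same
   number of permutations [s], so the expected number of rainbow sets of [F] is
   [#|F| * RB / 'C(N, 3) >= 2/9 * #|F|], where [RB] counts the rainbow 3-sets of [mod3]. *)
Lemma exists_rainbow_perm N (F : {set {set 'I_N}}) :
  {in F, forall S : {set 'I_N}, #|S| = 3} ->
  exists s : {perm 'I_N}, 2 * #|F| <= 9 * #|[set S in F | rainbow (@mod3 N \o s) S]|.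
Proof.
move=> F3; have [-> | [S0 S0F]] := set_0Vmem F; first by exists 1%g; rewrite cards0.
pose R (s : {perm 'I_N}) := #|[set S in F | rainbow (@mod3 N \o s) S]|.
pose RB := #|[set S : {set 'I_N} | (#|S| == 3) && rainbow (@mod3 N) S]|.
have sum_R : \sum_s R s = #|F| * rainbow_perms S0.
  have rp_eq S : S \in F -> rainbow_perms S0 = rainbow_perms S.
    by move=> SF; apply: rainbow_perms_eq; rewrite !F3.
  rewrite -sum_nat_const (eq_bigr _ rp_eq).
  by rewrite exchange_big /=; apply: eq_bigr => s _; rewrite /R card_set_sum.
have threes_RB : 'C(N, 3) * rainbow_perms S0 = #|{perm 'I_N}| * RB.
  rewrite -sum_rainbow_perms -[N in 'C(N, 3)]card_ord -card_draws -sum_nat_cond_const.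
  by apply: eq_bigr => S /eqP S3; apply: rainbow_perms_eq; rewrite S3 F3.
have perms_gt0 : 0 < #|{perm 'I_N}| by apply/card_gt0P; exists 1%g.
have threes_gt0 : 0 < 'C(N, 3).
  by rewrite -[N in 'C(N, 3)]card_ord -card_draws; apply/card_gt0P; exists S0; rewrite inE F3.
have [s R_max] := exists_ge_average R perms_gt0; exists s.
have PC_gt0 : 0 < #|{perm 'I_N}| * 'C(N, 3) by rewrite muln_gt0 perms_gt0.
rewrite -(leq_pmul2l PC_gt0).
apply: (@leq_trans (#|F| * #|{perm 'I_N}| * (9 * RB))).
  rewrite [X in X <= _](_ : _ = #|F| * #|{perm 'I_N}| * (2 * 'C(N, 3))); last by ring.
  by rewrite leq_mul2l card_rainbow_mod3_sets_ge orbT.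
have -> : #|F| * #|{perm 'I_N}| * (9 * RB) = 9 * 'C(N, 3) * (#|F| * rainbow_perms S0).
  by transitivity (9 * #|F| * ('C(N, 3) * rainbow_perms S0)); [rewrite threes_RB | ]; ring.
rewrite -sum_R (leq_trans (leq_mul (leqnn _) R_max)) //.
by apply: eq_leq; ring.
Qed.

Theorem theorem1 (k n : nat) (hk : 2 <= k) (hn : 0 < n) :
  t_max (2 * k + 1) n <= 9 * (k - 1) * ex_bip_cycle ((n + 2) %/ 3) ((n + 2) %/ 3) (2 * k).
Proof.
apply/bigmax_leqP => E /andP [simpleE freeE].
have [s two_t] : exists s : {perm 'I_n},
    2 * #|triangle_sets E| <= 9 * #|[set S in triangle_sets E | rainbow (@mod3 n \o s) S]|.
  by apply: exists_rainbow_perm => S; rewrite inE => /andP [/eqP].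
(* Within a colour class of [mod3 \o s], the quotient [s x %/ 3] is an injective index. *)
have idx_lt (x : 'I_n) : s x %/ 3 < (n + 2) %/ 3 by have := ltn_ord (s x); lia.
pose idx x := Ordinal (idx_lt x).
have idx_inj x y : (@mod3 n \o s) x = (@mod3 n \o s) y -> idx x = idx y -> x = y.
  move=> /(congr1 val) /= hc /(congr1 val) /= hi; apply: (@perm_inj _ s); apply: val_inj.
  by rewrite (divn_eq (val (s x)) 3) (divn_eq (val (s y)) 3) hc hi.
have := rainbow_triangles_le simpleE idx_inj (ltnW hk) freeE.
rewrite -(leq_pmul2l (isT : 0 < 9)) => hR.
rewrite -(leq_pmul2l (isT : 0 < 2)); apply: leq_trans two_t (leq_trans hR _).
by rewrite subn1; apply: eq_leq; ring.
Qed.
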